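(* Fix $t>0$ and $\alpha\ge 0$. For every $\phi\in C([0,t];\mathbb{R})$: (1) $\mathcal{T}(T_\alpha(\phi))(s)=\mathbb{T}_{\log\{e^{2\phi_t}/(1+\alpha A_t(\phi))\}}(\phi)(s)$ for $0\le s\le t$; (2) $T_\alpha(\mathcal{T}(\phi))(s)=\mathbb{T}_{\log\{e^{2\phi_t}+\alpha A_t(\phi)\}}(\phi)(s)$ for $0\le s\le t$.
   Context: For $\phi\in C([0,t];\mathbb{R})$ let $A_s(\phi)=\int_0^s e^{2\phi_u}\,du$. For $z\in\mathbb{R}$, $\mathbb{T}_z(\phi)(s)=\phi_s-\log\{1+\frac{A_s(\phi)}{A_t(\phi)}(e^z-1)\}$, $0\le s\le t$; $\mathcal{T}(\phi)(s)=\mathbb{T}_{2\phi_t}(\phi)(s)$; and $T_\alpha(\phi)(s)=\phi_s-\log\{1+\alpha A_s(\phi)\}$, $0\le s\le t$. *)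

From Stdlib Require Import Reals.
From Coquelicot Require Import Coquelicot.
Open Scope R_scope.

Definition cont_on_0t (t : R) (phi : R -> R) : Prop :=
  forall u, 0 <= u <= t ->
    filterlim phi (within (fun v => 0 <= v <= t) (locally u)) (locally (phi u)).

Definition A (phi : R -> R) (s : R) : R := RInt (fun u => exp (2 * phi u)) 0 s.

Definition bbT (t z : R) (phi : R -> R) (s : R) : R :=
  phi s - ln (1 + A phi s / A phi t * (exp z - 1)).

Definition calT (t : R) (phi : R -> R) : R -> R := bbT t (2 * phi t) phi.

Definition Talpha (alpha : R) (phi : R -> R) (s : R) : R :=
  phi s - ln (1 + alpha * A phi s).

(** Both transformations are of the form [T_c phi = phi - ln (1 + c A(phi))]:
    [T_alpha] is [T_c] with [c = alpha], and [bbT_z] is [T_c] with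
    [c = (e^z - 1) / A_t(phi)].  Since
    [d/ds (A / (1 + c A)) = e^{2 phi} / (1 + c A)^2 = e^{2 (phi - ln (1 + c A))}],
    the weights of [T_c phi] are [A(T_c phi) = A(phi) / (1 + c A(phi))], and
    therefore [T_b (T_a phi) = T_(a+b) phi] whenever the logarithms are defined.
    Both identities then reduce to computing the resulting coefficient. *)

From Stdlib Require Import Reals Lra.
From Coquelicot Require Import Coquelicot.
Open Scope R_scope.

Lemma bbT_Talpha t z phi s :
  bbT t z phi s = Talpha ((exp z - 1) / A phi t) phi s.
Proof.
  unfold bbT, Talpha.
  replace (A phi s / A phi t * (exp z - 1)) with ((exp z - 1) / A phi t * A phi s)
    by (unfold Rdiv; ring).
  reflexivity.
Qed.

Lemma interp_pos x a w : 0 <= x <= a -> 0 < a -> 0 < w -> 0 < 1 + (w - 1) / a * x.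
Proof.
  intros Hx Ha Hw.
  assert (Hr : 0 <= x / a <= 1).
  { split.
    - apply Rdiv_le_0_compat; lra.
    - unfold Rdiv; rewrite <- (Rinv_r a) by lra.
      apply Rmult_le_compat_r; [left; apply Rinv_0_lt_compat |]; lra. }
  replace (1 + (w - 1) / a * x) with (1 - x / a + w * (x / a)) by (field; lra).
  nra.
Qed.

Lemma ln_add_shift a b x :
  0 < 1 + a * x -> 0 < 1 + (a + b) * x ->
  ln (1 + a * x) + ln (1 + b * (x / (1 + a * x))) = ln (1 + (a + b) * x).
Proof.
  intros Ha Hab.
  assert (Hquot : 1 + b * (x / (1 + a * x)) = (1 + (a + b) * x) / (1 + a * x))
    by (field; lra).
  rewrite Hquot, <- ln_mult by (try apply Rdiv_lt_0_compat; lra).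
  f_equal; field; lra.
Qed.

Lemma exp2_sub_ln x y : 0 < y -> exp (2 * (x - ln y)) = exp (2 * x) / y ^ 2.
Proof.
  intros Hy.
  replace (2 * (x - ln y)) with (2 * x + - (ln y + ln y)) by ring.
  rewrite exp_plus, exp_Ropp, exp_plus, exp_ln by exact Hy.
  field; lra.
Qed.

Lemma continuous_exp2 (f : R -> R) x :
  continuous f x -> continuous (fun u => exp (2 * f u)) x.
Proof.
  intros Hf; apply continuous_exp_comp.
  exact (@continuous_mult R_UniformSpace R_AbsRing (fun _ => 2) f x
           (continuous_const _ _) Hf).
Qed.

Lemma is_derive_A (f : R -> R) : (forall x, continuous f x) ->
  forall x, is_derive (A f) x (exp (2 * f x)).
Proof.
  intros Hf x; unfold A.
  apply (is_derive_RInt (fun u => exp (2 * f u))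
           (fun b => RInt (fun u => exp (2 * f u)) 0 b) 0 x).
  - apply filter_forall; intros b.
    apply (@RInt_correct R_CompleteNormedModule).
    apply (@ex_RInt_continuous R_CompleteNormedModule).
    intros; apply continuous_exp2; auto.
  - apply continuous_exp2; auto.
Qed.

Lemma RInt_exp2_div_sqr (f : R -> R) c s :
  (forall x, continuous f x) -> 0 <= s ->
  (forall u, 0 <= u <= s -> 0 < 1 + c * A f u) ->
  RInt (fun u => exp (2 * f u) / (1 + c * A f u) ^ 2) 0 s
    = A f s / (1 + c * A f s).
Proof.
  intros Hf Hs Hpos.
  assert (HexA : forall u, ex_derive (A f) u)
    by (intros u; exists (exp (2 * f u)); apply is_derive_A, Hf).
  assert (HA0 : A f 0 = 0) by exact (RInt_point 0 (fun u => exp (2 * f u))).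
  apply (@is_RInt_unique R_CompleteNormedModule).
  replace (A f s / (1 + c * A f s))
    with (minus (A f s / (1 + c * A f s)) (A f 0 / (1 + c * A f 0)))
    by (rewrite HA0; unfold Rdiv; rewrite Rmult_0_l; apply Rminus_0_r).
  apply (@is_RInt_derive R_CompleteNormedModule (fun u => A f u / (1 + c * A f u)));
    intros u Hu; rewrite Rmin_left, Rmax_right in Hu by lra;
    specialize (Hpos u Hu).
  - auto_derive.
    + repeat split; auto; lra.
    + replace (Derive (fun x => A f x) u) with (exp (2 * f u))
        by (symmetry; apply is_derive_unique, is_derive_A, Hf).
      field; lra.
  - apply (@continuous_mult R_UniformSpace R_AbsRing).
    + apply continuous_exp2, Hf.
    + apply (@ex_derive_continuous R_AbsRing R_NormedModule); auto_derive.
      repeat split; auto; nra.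
Qed.

Definition clamp (t u : R) : R := Rmax 0 (Rmin u t).

Lemma clamp_in t u : 0 <= t -> 0 <= clamp t u <= t.
Proof. intros; unfold clamp, Rmax, Rmin; repeat destruct Rle_dec; lra. Qed.

Lemma clamp_id t u : 0 <= u <= t -> clamp t u = u.
Proof. intros; unfold clamp, Rmax, Rmin; repeat destruct Rle_dec; lra. Qed.

Lemma Rabs_clamp_sub_le t x y : 0 <= t -> Rabs (clamp t y - clamp t x) <= Rabs (y - x).
Proof.
  intros; unfold clamp, Rmax, Rmin; repeat destruct Rle_dec;
    unfold Rabs; repeat destruct Rcase_abs; lra.
Qed.

Section Weights.

Variables (t : R) (phi : R -> R).
Hypotheses (Ht : 0 < t) (Hphi : cont_on_0t t phi).

(* [phi] is only continuous on [0,t]; [phic] is a globally continuous extension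
   with the same weights on [0,t], to which the fundamental theorem of calculus
   applies up to the endpoints. *)
Let phic u := phi (clamp t u).

Lemma continuous_phic x : continuous phic x.
Proof.
  assert (Ht0 : 0 <= t) by lra.
  unfold continuous, phic.
  apply filterlim_comp
    with (G := within (fun v => 0 <= v <= t) (locally (clamp t x))).
  - intros P [eps He]; exists eps; intros y Hy; apply He.
    + change (Rabs (clamp t y - clamp t x) < eps).
      change (Rabs (y - x) < eps) in Hy.
      pose proof (Rabs_clamp_sub_le t x y Ht0); lra.
    + apply clamp_in; lra.
  - apply Hphi, clamp_in; lra.
Qed.

Lemma ex_RInt_exp2_phic a b : ex_RInt (fun u => exp (2 * phic u)) a b.
Proof.
  apply (@ex_RInt_continuous R_CompleteNormedModule).
  intros; apply continuous_exp2, continuous_phic.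
Qed.

Lemma A_phic s : 0 <= s <= t -> A phi s = A phic s.
Proof.
  intros Hs; unfold A; apply RInt_ext; intros x Hx.
  rewrite Rmin_left, Rmax_right in Hx by lra.
  unfold phic; rewrite clamp_id by lra; reflexivity.
Qed.

Lemma A_gt0 : 0 < A phi t.
Proof.
  rewrite A_phic by lra; unfold A.
  apply RInt_gt_0; auto.
  - intros; apply exp_pos.
  - intros; apply continuous_exp2, continuous_phic.
Qed.

Lemma A_bounds s : 0 <= s <= t -> 0 <= A phi s <= A phi t.
Proof.
  intros Hs.
  assert (Hge0 : forall a b, a <= b -> 0 <= RInt (fun u => exp (2 * phic u)) a b).
  { intros a b Hab; apply RInt_ge_0; auto using ex_RInt_exp2_phic.
    intros; left; apply exp_pos. }
  rewrite (A_phic t), (A_phic s) by lra; unfold A.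
  rewrite <- (RInt_Chasles _ 0 s t) by apply ex_RInt_exp2_phic.
  change (plus ?a ?b) with (a + b).
  pose proof (Hge0 0 s); pose proof (Hge0 s t); lra.
Qed.

Lemma A_Talpha c psi :
  (forall u, 0 <= u <= t -> 0 < 1 + c * A phi u) ->
  (forall u, 0 <= u <= t -> psi u = Talpha c phi u) ->
  forall s, 0 <= s <= t -> A psi s = A phi s / (1 + c * A phi s).
Proof.
  intros Hpos Hpsi s Hs.
  assert (HposC : forall u, 0 <= u <= s -> 0 < 1 + c * A phic u)
    by (intros u Hu; rewrite <- A_phic by lra; apply Hpos; lra).
  rewrite A_phic, <- (RInt_exp2_div_sqr phic c s continuous_phic)
    by (exact HposC || lra).
  unfold A at 1; apply RInt_ext; intros u Hu.
  rewrite Rmin_left, Rmax_right in Hu by lra.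
  assert (Hu' : 0 <= u <= t) by lra.
  rewrite Hpsi by exact Hu'.
  unfold Talpha, phic; rewrite clamp_id, <- A_phic by exact Hu'.
  apply exp2_sub_ln, Hpos, Hu'.
Qed.

Lemma Talpha_comp a b psi s :
  (forall u, 0 <= u <= t -> 0 < 1 + a * A phi u) ->
  (forall u, 0 <= u <= t -> psi u = Talpha a phi u) ->
  0 <= s <= t -> 0 < 1 + (a + b) * A phi s ->
  Talpha b psi s = Talpha (a + b) phi s.
Proof.
  intros Hpos Hpsi Hs Hab.
  unfold Talpha at 1; rewrite (A_Talpha a psi Hpos Hpsi s Hs), Hpsi by exact Hs.
  unfold Talpha; rewrite <- (ln_add_shift a b) by auto using Hpos.
  ring.
Qed.

End Weights.

Theorem lemma4p1 (t alpha : R) (phi : R -> R) :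
  0 < t -> 0 <= alpha -> cont_on_0t t phi ->
  forall s, 0 <= s <= t ->
    calT t (Talpha alpha phi) s
      = bbT t (ln (exp (2 * phi t) / (1 + alpha * A phi t))) phi s
    /\ Talpha alpha (calT t phi) s
      = bbT t (ln (exp (2 * phi t) + alpha * A phi t)) phi s.
Proof.
  intros Ht Halpha Hphi s Hs.
  pose proof (A_gt0 t phi Ht Hphi) as Ha.
  pose proof (A_bounds t phi Ht Hphi) as HA.
  pose proof (exp_pos (2 * phi t)) as HE.
  assert (Hpos : forall u, 0 <= u <= t -> 0 < 1 + alpha * A phi u)
    by (intros u Hu; specialize (HA u Hu); nra).
  unfold calT; rewrite !bbT_Talpha, exp_ln, exp_ln
    by (try apply Rdiv_lt_0_compat; auto; nra).
  set (a := A phi t) in *; set (E := exp (2 * phi t)) in *.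
  assert (Hat : 0 < 1 + alpha * a) by (apply Hpos; lra).
  split.
  - set (psi := Talpha alpha phi).
    assert (HApsi : A psi t = a / (1 + alpha * a))
      by (apply (A_Talpha t phi); auto; lra).
    assert (HEpsi : exp (2 * psi t) = E / (1 + alpha * a) ^ 2)
      by (apply exp2_sub_ln, Hat).
    assert (Hcoef : alpha + (exp (2 * psi t) - 1) / A psi t
                    = (E / (1 + alpha * a) - 1) / a)
      by (rewrite HApsi, HEpsi; field; lra).
    rewrite (Talpha_comp t phi Ht Hphi alpha); auto.
    + rewrite Hcoef; reflexivity.
    + rewrite Hcoef; apply interp_pos; auto; apply Rdiv_lt_0_compat; lra.
  - set (c := (E - 1) / a).
    assert (Hcoef : c + alpha = (E + alpha * a - 1) / a) by (unfold c; field; lra).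
    rewrite (Talpha_comp t phi Ht Hphi c); auto.
    + rewrite Hcoef; reflexivity.
    + intros u Hu; apply interp_pos; auto.
    + intros u _; apply bbT_Talpha.
    + rewrite Hcoef; apply interp_pos; auto; nra.
Qed.
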